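(* Let $p\ge37$ be a prime, $\kappa>0$ and $\xi=\lfloor\sqrt p\rfloor$. Then any set $\mathcal{S}\subseteq\mathbb{F}_p$ of size $\#\mathcal{S}\ge16p^{2\kappa}$ contains pairwise disjoint subsets $\mathcal{D}_k$, $k=1,\ldots,K$, and $\mathcal{E}_\ell$, $\ell=1,\ldots,L$, such that (i) $\#\mathcal{D}_k,\#\mathcal{E}_\ell\ge0.25p^{-\kappa}(\#\mathcal{S})^{1/2}$ for all $k,\ell$; (ii) each $\mathcal{D}_k$ is a $\sqrt p/3$-spaced set; (iii) each set $\xi\mathcal{E}_\ell=\{\xi a~:~a\in\mathcal{E}_\ell\}$ is a $\sqrt p/3$-spaced set; (iv) $\#\big(\mathcal{S}\setminus(\mathcal{S}_0\cup\mathcal{S}_1)\big)\le2p^{-\kappa}\#\mathcal{S}$, where $\mathcal{S}_0=\bigcup_{k=1}^K\mathcal{D}_k$ and $\mathcal{S}_1=\bigcup_{\ell=1}^L\mathcal{E}_\ell$.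
   Context: For $x\in\mathbb{F}_p$, $|x|$ denotes the minimum of the absolute values of the integers in the residue class of $x$ modulo $p$. A set $\mathcal{D}\subseteq\mathbb{F}_p$ is $\Delta$-spaced if $|d_1-d_2|\ge\Delta$ for any two distinct $d_1,d_2\in\mathcal{D}$. *)

From HB Require Import structures.
From mathcomp Require Import all_boot all_order all_algebra.
From mathcomp Require Import reals exp.
Set Implicit Arguments. Unset Strict Implicit. Unset Printing Implicit Defensive.
Import Order.TTheory GRing.Theory Num.Theory.
Local Open Scope ring_scope.

(* |x| for x in F_p: the least absolute value of an integer in the residue
   class of x, i.e. min(x, p - x) for the representative 0 <= x < p. *)
Definition absFp (p : nat) (x : 'F_p) : nat := minn (val x) (p - val x).

Definition spaced (R : realType) (p : nat) (Delta : R) (D : {set 'F_p}) : Prop :=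
  forall d1 d2, d1 \in D -> d2 \in D -> d1 != d2 -> Delta <= (absFp (d1 - d2))%:R.

Definition dilate (p : nat) (c : nat) (E : {set 'F_p}) : {set 'F_p} :=
  [set (c%:R * a) | a in E].

From HB Require Import structures.
From mathcomp Require Import all_boot all_order all_algebra.
From mathcomp Require Import reals exp.
From mathcomp Require Import zify lra.
Import Order.TTheory GRing.Theory Num.Theory.
Set Implicit Arguments. Unset Strict Implicit. Unset Printing Implicit Defensive.
Local Open Scope ring_scope.

(* Cut F_p = {0, ..., p-1} into consecutive blocks of length h, roughly xi/3.
   A block containing at least t = p^-kappa |S|^(1/2) / 4 points of S is kept
   as one of the E_l: two of its points differ by less than h, so after
   multiplication by xi their difference is an integer between xi and p/3,
   hence at least sqrt p / 3 in absolute value.  The points of S in the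
   other, light, blocks are classified by their rank inside their block (less
   than t) and by the parity of the block index; two points with the same rank
   and parity lie in blocks at least two apart, so they are more than h apart.
   The classes with at least t points are the D_k; the at most 3 (t + 1)
   remaining classes have fewer than t points each, and
   3 (t + 1) t <= 2 p^-kappa |S|. *)

Lemma card_bigcup_le (T I : finType) (P : pred I) (F : I -> {set T}) :
  (#|\bigcup_(i | P i) F i| <= \sum_(i | P i) #|F i|)%N.
Proof.
elim/big_rec2: _ => [|i A n _ le_An]; first by rewrite cards0.
by apply: leq_trans (leq_card_setU _ _) _; rewrite leq_add2l.
Qed.

Lemma card_bigcup_small (R : numDomainType) (T I : finType) (F : I -> {set T})
    (t : R) :
  0 <= t -> (#|\bigcup_(i | #|F i|%:R < t) F i|%:R <= #|I|%:R * t).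
Proof.
move=> t_ge0; apply: le_trans (_ : (\sum_(i | #|F i|%:R < t) #|F i|)%:R <= _).
  by rewrite ler_nat card_bigcup_le.
rewrite natr_sum; apply: le_trans (_ : \sum_(i | #|F i|%:R < t) t <= _).
  by apply: ler_sum => i /ltW.
have -> : #|I|%:R * t = \sum_(i : I) t by rewrite sumr_const mulr_natl.
rewrite [X in _ <= X](bigID (fun i => #|F i|%:R < t)) /= lerDl.
exact: sumr_ge0.
Qed.

Section AbsFp.
Variable p : nat.
Hypothesis p_pr : prime p.

Lemma val_Fp_lt (x : 'F_p) : (val x < p)%N.
Proof. by have := ltn_ord x; rewrite -[X in (_ < X)%N]card_ord card_Fp. Qed.

Lemma absFp_natr n : (n < p)%N -> absFp (n%:R : 'F_p) = minn n (p - n).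
Proof. by move=> lt_np; rewrite /absFp /= val_Fp_nat // modn_small. Qed.

Lemma Fp_subE (x y : 'F_p) : (val y <= val x)%N -> x - y = (val x - val y)%:R.
Proof. by move=> le_yx; rewrite natrB // !natr_Zp. Qed.

Lemma absFpN (x : 'F_p) : absFp (- x) = absFp x.
Proof.
have [-> | x_neq0] := eqVneq x 0; first by rewrite oppr0.
have x_gt0 : (0 < val x)%N.
  by rewrite lt0n; apply: contra x_neq0 => /eqP x0; apply/eqP/val_inj.
have lt_xp := val_Fp_lt x.
have -> : - x = (p - val x)%:R.
  by rewrite natrB ?(ltnW lt_xp) // pchar_Fp_0 // natr_Zp sub0r.
rewrite absFp_natr ?ltn_subrL ?x_gt0 ?(prime_gt0 p_pr) //.
by rewrite /absFp subKn ?(ltnW lt_xp) // minnC.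
Qed.

Lemma dilate1 (D : {set 'F_p}) : dilate 1 D = D.
Proof. by rewrite /dilate (eq_imset _ (@mul1r _)) imset_id. Qed.

Lemma spaced_dilate (R : realType) (Delta : R) c (E : {set 'F_p}) :
  (forall a1 a2, a1 \in E -> a2 \in E -> (val a2 < val a1)%N ->
     Delta <= (absFp (c%:R * (a1 - a2)))%:R) ->
  spaced Delta (dilate c E).
Proof.
move=> spE _ _ /imsetP[a1 a1E ->] /imsetP[a2 a2E ->] neq.
have : val a1 != val a2 by apply: contraNneq neq => /val_inj ->.
rewrite -mulrBr; case: ltngtP => [lt_a|lt_a|//] _.
  by rewrite -opprB mulrN absFpN; apply: spE.
exact: spE.
Qed.

Lemma spaced_lt (R : realType) (Delta : R) (D : {set 'F_p}) :
  (forall d1 d2, d1 \in D -> d2 \in D -> (val d2 < val d1)%N ->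
     Delta <= (absFp (d1 - d2))%:R) ->
  spaced Delta D.
Proof.
by move=> spD; rewrite -(dilate1 D); apply: spaced_dilate => *; rewrite mul1r spD.
Qed.

Lemma spaced_le (R : realType) (Delta Delta' : R) (D : {set 'F_p}) :
  Delta' <= Delta -> spaced Delta D -> spaced Delta' D.
Proof. by move=> le_D spD d1 d2 *; apply: le_trans le_D (spD d1 d2 _ _ _). Qed.

End AbsFp.

(* Block 0 forms a class of its own: otherwise it could share a class with
   the last block, which is adjacent to it across p = 0. *)
Definition block_class (j : nat) : nat := (if j == 0 then 2 else j %% 2)%N.

Lemma block_class_far i j : block_class i = block_class j -> (i < j)%N ->
  (0 < i)%N /\ (i.+2 <= j)%N.
Proof. by rewrite /block_class; do 2![case: eqP]; lia. Qed.

Section Blocks.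
Variables (p h : nat) (S : {set 'F_p}).
Hypotheses (p_pr : prime p) (h_gt0 : (0 < h)%N).

Definition block (x : 'F_p) : nat := (val x %/ h)%N.

Definition block_set (j : nat) : {set 'F_p} := [set y in S | block y == j].

Definition block_rank (x : 'F_p) : nat :=
  #|[set y in block_set (block x) | (val y < val x)%N]|.

Lemma block_rank_lt x : x \in S -> (block_rank x < #|block_set (block x)|)%N.
Proof.
move=> xS; apply: proper_card; apply/properP; split.
  by apply/subsetP => y; rewrite inE => /andP[].
by exists x; rewrite !inE ?xS ?eqxx ?ltnn.
Qed.

Lemma block_rank_mono x y : y \in S -> block x = block y -> (val y < val x)%N ->
  (block_rank y < block_rank x)%N.
Proof.
move=> yS bxy lt_yx; apply: proper_card; apply/properP; split.
  apply/subsetP => z; rewrite !inE bxy => /andP[/andP[-> ->] lt_zy] /=.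
  exact: ltn_trans lt_zy lt_yx.
by exists y; rewrite !inE ?yS ?bxy ?eqxx ?ltnn ?lt_yx.
Qed.

Lemma block_rank_inj x y : x \in S -> y \in S -> block x = block y ->
  block_rank x = block_rank y -> x = y.
Proof.
move=> xS yS bxy rxy; case: (ltngtP (val x) (val y)) => [lt_xy|lt_yx|/val_inj //].
  by have := block_rank_mono xS (esym bxy) lt_xy; rewrite rxy ltnn.
by have := block_rank_mono yS bxy lt_yx; rewrite rxy ltnn.
Qed.

Lemma absFp_sub_far x y : (val y < val x)%N -> (0 < block y)%N ->
  ((block y).+2 <= block x)%N -> (h < absFp (x - y)%R)%N.
Proof.
rewrite /block => lt_yx by_gt0 bxy.
have lt_xp := val_Fp_lt p_pr x.
have le_x := leq_divM (val x) h; have le_y := leq_divM (val y) h.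
have lt_y := ltn_ceil (val y) h_gt0.
rewrite Fp_subE ?(ltnW lt_yx) // absFp_natr //; last lia.
rewrite leq_min; apply/andP; split; nia.
Qed.

Lemma absFp_dilate_sub_same_block c x y : (val y < val x)%N -> block x = block y ->
  (c * (h - 1) < p)%N -> (minn c (p - c * (h - 1)) <= absFp (c%:R * (x - y))%R)%N.
Proof.
rewrite /block => lt_yx bxy lt_chp.
have le_y := leq_divM (val y) h; have lt_x := ltn_ceil (val x) h_gt0.
have le_xyh : (val x - val y <= h - 1)%N by rewrite bxy in lt_x; nia.
have le_cd : (c * (val x - val y) <= c * (h - 1))%N by rewrite leq_mul2l le_xyh orbT.
have le_c : (c <= c * (val x - val y))%N by rewrite leq_pmulr // subn_gt0.
rewrite Fp_subE ?(ltnW lt_yx) // -natrM absFp_natr //; last lia.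
rewrite leq_min !geq_min; apply/andP; split; lia.
Qed.

End Blocks.

Section Decomposition.
Variables (R : realType) (p h : nat) (t : R) (S : {set 'F_p}).
Hypotheses (p_pr : prime p) (h_gt0 : (0 < h)%N) (t_ge0 : 0 <= t).

Let M := (Num.truncn t).+1.

Definition light (x : 'F_p) : bool := #|block_set h S (block h x)|%:R < t.

Definition light_piece (cr : 'I_3 * 'I_M) : {set 'F_p} :=
  [set x in S | [&& light x, block_class (block h x) == cr.1
                           & block_rank h S x == cr.2]].

Definition big_piece (cr : 'I_3 * 'I_M) : bool := t <= #|light_piece cr|%:R.

Definition heavy_block (j : 'I_p) : bool := t <= #|block_set h S j|%:R.

Lemma light_piece_disjoint cr1 cr2 :
  cr1 != cr2 -> [disjoint light_piece cr1 & light_piece cr2].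
Proof.
move=> neq; rewrite -setI_eq0; apply/eqP/setP => x; rewrite !inE.
apply/negP => /andP[/andP[_ /and3P[_ /eqP c1 /eqP r1]]].
move=> /andP[_ /and3P[_ /eqP c2 /eqP r2]].
move/negP: neq; apply; case: cr1 c1 r1 => a1 b1; case: cr2 c2 r2 => a2 b2 /=.
by move=> c2 r2 c1 r1; rewrite xpair_eqE -!val_eqE /= -c1 -c2 -r1 -r2 !eqxx.
Qed.

Lemma light_piece_spaced cr : spaced (h.+1%:R : R) (light_piece cr).
Proof.
apply: spaced_lt => // x y; rewrite !inE.
move=> /andP[xS /and3P[_ /eqP cx /eqP rx]] /andP[yS /and3P[_ /eqP cy /eqP ry]].
move=> lt_yx; rewrite ler_nat.
have neq_b : block h x != block h y.
  apply: contraTneq lt_yx => bxy.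
  by rewrite (block_rank_inj xS yS bxy) ?ltnn // rx ry.
have le_b : (block h y <= block h x)%N by rewrite leq_div2r // ltnW.
have [] := @block_class_far (block h y) (block h x); first by rewrite cx cy.
  by rewrite ltn_neqAle eq_sym neq_b le_b.
exact: absFp_sub_far.
Qed.

Lemma block_set_disjoint (i j : nat) :
  i != j -> [disjoint block_set h S i & block_set h S j].
Proof.
move=> neq; rewrite -setI_eq0; apply/eqP/setP => x; rewrite !inE.
apply/negP => /andP[/andP[_ /eqP bi] /andP[_ /eqP bj]].
by rewrite -bi -bj eqxx in neq.
Qed.

Lemma light_piece_heavy_disjoint cr (j : 'I_p) :
  heavy_block j -> [disjoint light_piece cr & block_set h S j].
Proof.
move=> heavy; rewrite -setI_eq0; apply/eqP/setP => x; rewrite !inE.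
apply/negP => /andP[/andP[_ /and3P[x_light _ _]] /andP[_ /eqP bxj]].
by move: x_light; rewrite /light bxj ltNge -/(heavy_block j) heavy.
Qed.

Lemma block_set_spaced_dilate c (j : nat) : (c * (h - 1) < p)%N ->
  spaced ((minn c (p - c * (h - 1)))%:R : R) (dilate c (block_set h S j)).
Proof.
move=> lt_chp; apply: spaced_dilate => // a1 a2; rewrite !inE.
move=> /andP[_ /eqP b1] /andP[_ /eqP b2] lt_a; rewrite ler_nat.
by apply: absFp_dilate_sub_same_block => //; rewrite b1 b2.
Qed.

Lemma leftover_sub :
  S :\: (\bigcup_(cr in big_piece) light_piece cr :|:
         \bigcup_(j in heavy_block) block_set h S j)
    \subset \bigcup_(cr | #|light_piece cr|%:R < t) light_piece cr.
Proof.
apply/subsetP => x; rewrite !inE negb_or => /andP[/andP[notD notE] xS].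
have x_light : light x.
  rewrite /light ltNge; apply: contra notE => heavy; apply/bigcupP.
  have lt_bp : (block h x < p)%N by apply: leq_ltn_trans (leq_div _ _) (val_Fp_lt p_pr x).
  by exists (Ordinal lt_bp); rewrite // inE xS /=.
have lt_class : (block_class (block h x) < 3)%N by rewrite /block_class; case: eqP; lia.
have lt_rank : (block_rank h S x < M)%N.
  rewrite ltnS truncn_ge_nat //; apply: ltW; apply: le_lt_trans x_light.
  by rewrite ler_nat ltnW // block_rank_lt.
pose cr : 'I_3 * 'I_M := (Ordinal lt_class, Ordinal lt_rank).
have x_cr : x \in light_piece cr by rewrite inE xS x_light !eqxx.
apply/bigcupP; exists cr => //; rewrite ltNge; apply: contra notD => big.
by apply/bigcupP; exists cr.
Qed.

Lemma block_decomposition c : (c * (h - 1) < p)%N ->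
  exists (K L : nat) (D : 'I_K -> {set 'F_p}) (E : 'I_L -> {set 'F_p}),
    [/\ (forall k, D k \subset S) /\ (forall l, E l \subset S),
        (forall k1 k2, k1 != k2 -> [disjoint D k1 & D k2]),
        (forall l1 l2, l1 != l2 -> [disjoint E l1 & E l2]),
        (forall k l, [disjoint D k & E l]) &
     [/\ (forall k, t <= #|D k|%:R),
        (forall l, t <= #|E l|%:R),
        (forall k, spaced (h.+1%:R : R) (D k)),
        (forall l, spaced ((minn c (p - c * (h - 1)))%:R : R) (dilate c (E l))) &
        #|S :\: ((\bigcup_k D k) :|: (\bigcup_l E l))|%:R <= (3 * M)%:R * t]].
Proof.
move=> lt_chp.
exists #|big_piece|, #|heavy_block|, (fun k => light_piece (enum_val k)),
  (fun l => block_set h S (@enum_val _ heavy_block l)).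
split; [split|..|split].
- by move=> k; apply/subsetP => x; rewrite inE => /andP[].
- by move=> l; apply/subsetP => x; rewrite inE => /andP[].
- by move=> k1 k2 neq; apply: light_piece_disjoint; rewrite (inj_eq enum_val_inj).
- move=> l1 l2 neq; apply: block_set_disjoint.
  by rewrite (inj_eq val_inj) (inj_eq enum_val_inj).
- by move=> k l; apply: light_piece_heavy_disjoint; apply: (enum_valP l).
- by move=> k; apply: (enum_valP k).
- by move=> l; apply: (enum_valP l).
- by move=> k; apply: light_piece_spaced.
- by move=> l; apply: block_set_spaced_dilate.
rewrite -big_enum_val -(big_enum_val (fun j : 'I_p => block_set h S j)).
have := card_bigcup_small light_piece t_ge0; rewrite card_prod !card_ord.
by apply: le_trans; rewrite ler_nat subset_leq_card // leftover_sub.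
Qed.

End Decomposition.

Lemma small_pieces_bound (R : archiRealFieldType) (q s : R) :
  0 <= q <= 1 -> 4 <= s ->
  (3 * (Num.truncn (4^-1 * q * s)).+1)%:R * (4^-1 * q * s) <= 2 * q * (s * s).
Proof.
move=> /andP[q_ge0 q_le1] s_ge4; set t := 4^-1 * q * s.
have t_ge0 : 0 <= t by rewrite /t !mulr_ge0 // ?invr_ge0; lra.
have t_le : t <= s / 4 by rewrite /t; nra.
have le_tr := truncn_le t; rewrite t_ge0 in le_tr.
apply: le_trans (_ : 3 * (s / 2) * t <= _).
  by rewrite natrM -natr1; apply: ler_wpM2r => //; lra.
have : 0 <= q * (s * s) by rewrite !mulr_ge0 //; lra.
by rewrite /t; lra.
Qed.

Section SqrtParameters.
Variables (R : realType) (p : nat).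
Hypothesis p_gt0 : (0 < p)%N.

Let sp := Num.sqrt (p%:R : R).
Let xi := Num.truncn sp.
Let h := (xi %/ 3).+1.

Lemma sqrt_natr_ge1 : 1 <= sp.
Proof. by rewrite -sqrtr1 ler_sqrt // ler1n. Qed.

Lemma truncn_sqrt_bounds : xi%:R <= sp < xi%:R + 1.
Proof. by rewrite natr1 truncn_itv // (le_trans ler01 sqrt_natr_ge1). Qed.

Lemma truncn_sqrt_ge1 : 1 <= xi%:R :> R.
Proof. by rewrite ler1n truncn_gt0 sqrt_natr_ge1. Qed.

Lemma truncn_sqrt_sqr_le : (xi * xi <= p)%N.
Proof.
have /andP[xi_le _] := truncn_sqrt_bounds.
rewrite -(ler_nat R) natrM -[p%:R]sqr_sqrtr // expr2.
by apply: ler_pM.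
Qed.

Lemma three_mul_block_span_le : (3 * (xi * (h - 1)) <= p)%N.
Proof.
rewrite /h subn1 /= mulnCA [(3 * _)%N]mulnC.
by apply: leq_trans truncn_sqrt_sqr_le; rewrite leq_mul2l leq_divM orbT.
Qed.

Lemma block_span_lt : (xi * (h - 1) < p)%N.
Proof.
case: (posnP (xi * (h - 1))) => [-> // | span_gt0].
by apply: leq_trans three_mul_block_span_le; rewrite ltn_Pmull.
Qed.

Lemma sqrt_div3_le_blockS : sp / 3 <= h.+1%:R.
Proof.
have /andP[_ lt_xi] := truncn_sqrt_bounds.
have : (xi + 1 <= 3 * h)%N by rewrite addn1 /h mulnC ltn_ceil.
by rewrite -(ler_nat R) natrD natrM -[h.+1]addn1 natrD; lra.
Qed.

Lemma sqrt_div3_le_dilated_gap : sp / 3 <= (minn xi (p - xi * (h - 1)))%:R.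
Proof.
have /andP[_ lt_xi] := truncn_sqrt_bounds; have xi_ge1 := truncn_sqrt_ge1.
have sp_le_p : sp <= p%:R.
  rewrite -[p%:R]sqr_sqrtr // expr2 ler_peMl ?sqrt_natr_ge1 //.
  exact: le_trans ler01 sqrt_natr_ge1.
have : (p <= 3 * (p - xi * (h - 1)))%N.
  by move: (xi * _)%N three_mul_block_span_le => span; lia.
rewrite -(ler_nat R) natrM natr_min le_min => le_p.
by apply/andP; split; lra.
Qed.

End SqrtParameters.

Theorem lemma2p15 (R : realType) (p : nat) (kappa : R) (S : {set 'F_p}) :
  prime p -> (37 <= p)%N -> 0 < kappa ->
  let xi : nat := `|Num.floor (Num.sqrt (p%:R : R))|%N in
  16 * (p%:R `^ (2 * kappa)) <= (#|S|%:R : R) ->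
  exists (K L : nat) (D : 'I_K -> {set 'F_p}) (E : 'I_L -> {set 'F_p}),
    [/\ (forall k, D k \subset S) /\ (forall l, E l \subset S),
        (forall k1 k2, k1 != k2 -> [disjoint D k1 & D k2]),
        (forall l1 l2, l1 != l2 -> [disjoint E l1 & E l2]),
        (forall k l, [disjoint D k & E l]) &
     [/\ (forall k, 4^-1 * p%:R `^ (- kappa) * Num.sqrt (#|S|%:R) <= (#|D k|%:R : R)),
        (forall l, 4^-1 * p%:R `^ (- kappa) * Num.sqrt (#|S|%:R) <= (#|E l|%:R : R)),
        (forall k, spaced (Num.sqrt (p%:R : R) / 3) (D k)),
        (forall l, spaced (Num.sqrt (p%:R : R) / 3) (dilate xi (E l))) &
        (#|S :\: ((\bigcup_k D k) :|: (\bigcup_l E l))|%:R : R)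
          <= 2 * p%:R `^ (- kappa) * #|S|%:R ]].
Proof.
move=> p_pr _ kappa_gt0 xi hS.
have p_gt0 := prime_gt0 p_pr.
have -> : xi = Num.truncn (Num.sqrt (p%:R : R)) by rewrite /xi truncn_floor sqrtr_ge0.
set n := #|S| in hS *; set q := p%:R `^ (- kappa); set s := Num.sqrt (n%:R : R).
have p_ge1 : (1 : R) <= p%:R by rewrite ler1n.
have q_ge0 : 0 <= q by apply: powR_ge0.
have q_le1 : q <= 1.
  by have := @ler_powR R _ p_ge1 (- kappa) 0; rewrite powRr0; apply; lra.
have n_ge16 : 16 <= (n%:R : R).
  suff : 1 <= p%:R `^ (2 * kappa) :> R by lra.
  by have := @ler_powR R _ p_ge1 0 (2 * kappa); rewrite powRr0; apply; lra.
have ss : s * s = n%:R by rewrite -expr2 sqr_sqrtr.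
have s_ge0 : 0 <= s by apply: sqrtr_ge0.
have s_ge4 : 4 <= s by nra.
have t_ge0 : 0 <= 4^-1 * q * s by rewrite !mulr_ge0 // invr_ge0.
have [K [L [D [E [sub dD dE dDE [szD szE spD spE left]]]]]] :=
  block_decomposition S p_pr (ltn0Sn _) t_ge0 (block_span_lt R p_gt0).
exists K, L, D, E; split => //; split => //.
- by move=> k; apply: spaced_le (spD k); apply: sqrt_div3_le_blockS.
- by move=> l; apply: spaced_le (spE l); apply: sqrt_div3_le_dilated_gap.
apply: le_trans left _; rewrite -ss.
by apply: small_pieces_bound; rewrite ?q_ge0.
Qed.
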